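(* Let $X$ be an infinite dimensional real Banach space, and let $\psi$ be one of the cardinal functions $s$, $hL$, $hd$. Then $\psi(X^* )=\psi(B_{X^*})$, where $X^*$ and the closed dual unit ball $B_{X^*}$ carry the weak$^*$ topology.
   Context: For a topological space $Z$: $s(Z)=\sup\{|D|: D\subseteq Z \text{ is discrete in its subspace topology}\}$ (spread); $hd(Z)=\sup\{d(Y):Y\subseteq Z\}$ where $d(Y)$ is the least cardinality of a dense subset of $Y$ (hereditary density); $hL(Z)=\sup\{L(Y):Y\subseteq Z\}$ where $L(Y)$ is the least cardinal $\kappa$ such that every open cover of $Y$ has a subcover of cardinality at most $\kappa$ (hereditary Lindelöf degree). The weak$^*$ topology on $X^*$ is generated by the sets $\{x^*: x^*(x)\in I\}$, $x\in X$, $I\subseteq\mathbb R$ an open interval. *)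

From Stdlib Require Import Reals List.
Open Scope R_scope.

Record BanachSpace := {
  vec :> Type;
  vzero : vec;
  vadd : vec -> vec -> vec;
  vopp : vec -> vec;
  vscal : R -> vec -> vec;
  vnorm : vec -> R;
  vadd_assoc : forall x y z, vadd x (vadd y z) = vadd (vadd x y) z;
  vadd_comm : forall x y, vadd x y = vadd y x;
  vadd_zero : forall x, vadd x vzero = x;
  vadd_opp : forall x, vadd x (vopp x) = vzero;
  vscal_one : forall x, vscal 1 x = x;
  vscal_assoc : forall a b x, vscal a (vscal b x) = vscal (a * b) x;
  vscal_distr_vec : forall a x y, vscal a (vadd x y) = vadd (vscal a x) (vscal a y);
  vscal_distr_R : forall a b x, vscal (a + b) x = vadd (vscal a x) (vscal b x);
  vnorm_nonneg : forall x, 0 <= vnorm x;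
  vnorm_eq0 : forall x, vnorm x = 0 -> x = vzero;
  vnorm_scal : forall a x, vnorm (vscal a x) = Rabs a * vnorm x;
  vnorm_triangle : forall x y, vnorm (vadd x y) <= vnorm x + vnorm y;
  vcomplete : forall u : nat -> vec,
    (forall eps, eps > 0 -> exists N, forall m n, (N <= m)%nat -> (N <= n)%nat ->
        vnorm (vadd (u m) (vopp (u n))) < eps) ->
    exists l, forall eps, eps > 0 -> exists N, forall n, (N <= n)%nat ->
        vnorm (vadd (u n) (vopp l)) < eps
}.

Section Banach.
Variable X : BanachSpace.

Definition in_span (l : list X) (v : X) : Prop :=
  exists c : list R, length c = length l /\
    v = fold_right (vadd X) (vzero X)
          (map (fun p => vscal X (fst p) (snd p)) (combine c l)).

Definition infinite_dimensional : Prop :=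
  forall l : list X, exists v : X, ~ in_span l v.

Definition is_linear (f : X -> R) : Prop :=
  (forall x y, f (vadd X x y) = f x + f y) /\
  (forall a x, f (vscal X a x) = a * f x).

Definition is_bounded (f : X -> R) : Prop :=
  exists C, forall x, Rabs (f x) <= C * vnorm X x.

Definition dual : Type := { f : X -> R | is_linear f /\ is_bounded f }.

Definition in_dual_ball (f : dual) : Prop :=
  forall x, Rabs (proj1_sig f x) <= vnorm X x.

End Banach.

Record TopSpace := { pt : Type; isopen : (pt -> Prop) -> Prop }.

Inductive gen_open {T : Type} (S : (T -> Prop) -> Prop) : (T -> Prop) -> Prop :=
| go_sub : forall U, S U -> gen_open S U
| go_full : gen_open S (fun _ => True)
| go_inter : forall U V, gen_open S U -> gen_open S V ->
    gen_open S (fun x => U x /\ V x)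
| go_union : forall (I : Type) (F : I -> T -> Prop), (forall i, gen_open S (F i)) ->
    gen_open S (fun x => exists i, F i x)
| go_ext : forall U V, gen_open S U -> (forall x, U x <-> V x) -> gen_open S V.

Definition subspace (Z : TopSpace) (Y : pt Z -> Prop) : TopSpace :=
  {| pt := { z : pt Z | Y z };
     isopen := fun U => exists O, isopen Z O /\
                 forall y : { z : pt Z | Y z }, U y <-> O (proj1_sig y) |}.

Definition weakstar_subbasis (X : BanachSpace) (U : dual X -> Prop) : Prop :=
  exists (x : X) (a b : R), forall f, U f <-> (a < proj1_sig f x < b).

Definition dual_weakstar (X : BanachSpace) : TopSpace :=
  {| pt := dual X; isopen := gen_open (weakstar_subbasis X) |}.

Definition dual_ball_weakstar (X : BanachSpace) : TopSpace :=
  subspace (dual_weakstar X) (in_dual_ball X).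

Definition card_le (A K : Type) : Prop :=
  exists f : A -> K, forall a b, f a = f b -> a = b.

Definition discrete (T : TopSpace) : Prop := forall U, isopen T U.

Definition dense (T : TopSpace) (D : pt T -> Prop) : Prop :=
  forall O, isopen T O -> (exists x, O x) -> exists x, O x /\ D x.

Definition spread_le (Z : TopSpace) (K : Type) : Prop :=
  forall D : pt Z -> Prop, discrete (subspace Z D) -> card_le {z | D z} K.

Definition density_le (T : TopSpace) (K : Type) : Prop :=
  exists D : pt T -> Prop, dense T D /\ card_le {x | D x} K.

Definition hdensity_le (Z : TopSpace) (K : Type) : Prop :=
  forall Y : pt Z -> Prop, density_le (subspace Z Y) K.

Definition lindelof_le (T : TopSpace) (K : Type) : Prop :=
  forall U : (pt T -> Prop) -> Prop,
    (forall O, U O -> isopen T O) ->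
    (forall x, exists O, U O /\ O x) ->
    exists V : (pt T -> Prop) -> Prop,
      (forall O, V O -> U O) /\ (forall x, exists O, V O /\ O x) /\
      card_le {O | V O} K.

Definition hlindelof_le (Z : TopSpace) (K : Type) : Prop :=
  forall Y : pt Z -> Prop, lindelof_le (subspace Z Y) K.

(* Each of these hereditary cardinal functions is monotone along any injection whose
   domain carries (at most) the topology induced from the codomain ("trace
   injections", proved once for all three functions).  The inclusion B -> X^* is
   such a map.  Conversely, fix by Hahn-Banach (proved via Zorn's lemma from the
   one-step extension) a functional G in B with G x0 = |x0| for some x0 <> 0.
   For f in X^* pick n bounding its norm and send f to
   shrink n * f + (scale n / 2) * G,  with scale n = 4^-n.
   This lands in B, and inside the weak*-open window
   {g : 3/8 scale n |x0| < g x0 < 5/8 scale n |x0|}, these windows being pairwise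
   disjoint; on the n-th window the map has a weak*-continuous affine inverse, so
   X^* trace-injects into B.  Infinite dimensionality is only used to get x0 <> 0. *)
From Stdlib Require Import Reals List.
From Stdlib Require Import ClassicalEpsilon FunctionalExtensionality ProofIrrelevance Classical Lra Lia.
From mathcomp Require classical_sets.
Open Scope R_scope.

Section VectorAlgebra.
Variable X : BanachSpace.

Lemma vadd_cancel_l (a b c : X) : vadd X a b = vadd X a c -> b = c.
Proof.
intros E.
assert (E' : vadd X (vopp X a) (vadd X a b) = vadd X (vopp X a) (vadd X a c)) by now rewrite E.
rewrite !vadd_assoc, (vadd_comm X (vopp X a) a), vadd_opp in E'.
now rewrite (vadd_comm X (vzero X) b), (vadd_comm X (vzero X) c), !vadd_zero in E'.
Qed.

Lemma vscal_0 (x : X) : vscal X 0 x = vzero X.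
Proof.
apply (vadd_cancel_l (vscal X 0 x)).
rewrite vadd_zero, <- vscal_distr_R. f_equal; ring.
Qed.

Lemma vscal_vzero (a : R) : vscal X a (vzero X) = vzero X.
Proof. rewrite <- (vscal_0 (vzero X)), vscal_assoc. f_equal; ring. Qed.

Lemma vadd_zero_l (x : X) : vadd X (vzero X) x = x.
Proof. rewrite vadd_comm; apply vadd_zero. Qed.

Lemma vadd_swap4 (a b c d : X) :
  vadd X (vadd X a b) (vadd X c d) = vadd X (vadd X a c) (vadd X b d).
Proof.
rewrite !vadd_assoc. f_equal. rewrite <- !vadd_assoc. f_equal. apply vadd_comm.
Qed.

Lemma vscal_m1_cancel (y : X) : vadd X (vscal X (-1) y) y = vzero X.
Proof.
rewrite <- (vscal_one X y) at 2. rewrite <- vscal_distr_R.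
replace (-1 + 1) with 0 by ring. apply vscal_0.
Qed.

Lemma vnorm_pos (x : X) : x <> vzero X -> 0 < vnorm X x.
Proof.
intros nz. destruct (Rle_lt_or_eq_dec _ _ (vnorm_nonneg X x)) as [H|H]; auto.
exfalso; apply nz, vnorm_eq0; auto.
Qed.

Lemma vscal_factor (s : R) (d z : X) : s <> 0 ->
  vscal X s (vadd X (vscal X (/ s) d) z) = vadd X d (vscal X s z).
Proof.
intros ns. rewrite vscal_distr_vec, vscal_assoc, Rinv_r, vscal_one by exact ns.
reflexivity.
Qed.

Lemma combination_difference (d1 d2 y : X) (t1 t2 : R) :
  vadd X d1 (vscal X t1 y) = vadd X d2 (vscal X t2 y) ->
  vadd X (vadd X d1 (vscal X (-1) d2)) (vscal X (t1 - t2) y) = vzero X.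
Proof.
intros E.
assert (E' : vadd X (vadd X d1 (vscal X t1 y)) (vadd X (vscal X (-1) d2) (vscal X (- t2) y)) =
             vadd X (vadd X d2 (vscal X t2 y)) (vadd X (vscal X (-1) d2) (vscal X (- t2) y)))
  by now rewrite E.
rewrite (vadd_swap4 d1), (vadd_swap4 d2), <- !vscal_distr_R in E'.
replace (t2 + - t2) with 0 in E' by ring.
rewrite vscal_0, (vadd_comm X d2), vscal_m1_cancel, vadd_zero in E'.
now replace (t1 + - t2) with (t1 - t2) in E' by ring.
Qed.

End VectorAlgebra.

Section HahnBanach.
Variable X : BanachSpace.

Record dominated_partial (D : X -> Prop) (f : X -> R) : Prop := {
  dp_zero : D (vzero X);
  dp_add : forall x y, D x -> D y -> D (vadd X x y);
  dp_scal : forall a x, D x -> D (vscal X a x);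
  dp_fadd : forall x y, D x -> D y -> f (vadd X x y) = f x + f y;
  dp_fscal : forall a x, D x -> f (vscal X a x) = a * f x;
  dp_le : forall x, D x -> f x <= vnorm X x }.

Lemma dp_f0 D f : dominated_partial D f -> f (vzero X) = 0.
Proof.
intros g. rewrite <- (vscal_0 X (vzero X)), (dp_fscal _ _ g) by apply (dp_zero _ _ g). ring.
Qed.

Lemma decomposition_unique D f y (g : dominated_partial D f) (ny : ~ D y) d1 d2 t1 t2 :
  D d1 -> D d2 -> vadd X d1 (vscal X t1 y) = vadd X d2 (vscal X t2 y) -> d1 = d2 /\ t1 = t2.
Proof.
intros H1 H2 E. apply combination_difference in E.
set (e := vadd X d1 (vscal X (-1) d2)) in E.
assert (De : D e) by (unfold e; apply (dp_add _ _ g); auto; apply (dp_scal _ _ g); auto).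
destruct (Req_dec t1 t2) as [Et|Nt].
- subst t2. replace (t1 - t1) with 0 in E by ring.
  rewrite vscal_0, vadd_zero in E. unfold e in E. split; auto.
  apply (vadd_cancel_l X (vscal X (-1) d2)). now rewrite vadd_comm, E, vscal_m1_cancel.
- exfalso. apply ny.
  assert (E' : vscal X (/ (t1 - t2)) (vadd X e (vscal X (t1 - t2) y)) = vzero X)
    by now rewrite E, vscal_vzero.
  rewrite vscal_distr_vec, vscal_assoc, Rinv_l, vscal_one in E' by lra.
  assert (Hy : y = vscal X (-1) (vscal X (/ (t1 - t2)) e)).
  { apply (vadd_cancel_l X (vscal X (/ (t1 - t2)) e)).
    now rewrite E', vadd_comm, vscal_m1_cancel. }
  rewrite Hy. now apply (dp_scal _ _ g), (dp_scal _ _ g).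
Qed.

Definition add_line (D : X -> Prop) (y x : X) : Prop :=
  exists d t, D d /\ x = vadd X d (vscal X t y).

Definition extend_fun (D : X -> Prop) (f : X -> R) (y : X) (c : R) (x : X) : R :=
  let p := epsilon (inhabits (vzero X, 0))
             (fun q => D (fst q) /\ x = vadd X (fst q) (vscal X (snd q) y)) in
  f (fst p) + snd p * c.

Lemma extend_fun_eq D f y c (g : dominated_partial D f) (ny : ~ D y) d t :
  D d -> extend_fun D f y c (vadd X d (vscal X t y)) = f d + t * c.
Proof.
intros Dd. unfold extend_fun; cbv zeta.
match goal with |- context [epsilon ?i ?P] =>
  assert (HP : P (epsilon i P)) by (apply epsilon_spec; exists (d, t); simpl; auto);
  set (p := epsilon i P) in * end.
destruct HP as [H1 H2].
destruct (decomposition_unique D f y g ny _ _ _ _ Dd H1 H2) as [E1 E2].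
now rewrite <- E1, <- E2.
Qed.

Section OneStep.
Variables (D : X -> Prop) (f : X -> R) (y : X) (c : R).
Hypotheses (g : dominated_partial D f) (ny : ~ D y).
Hypotheses (c_upper : forall e, D e -> f e + c <= vnorm X (vadd X e y))
           (c_lower : forall e, D e -> f e - c <= vnorm X (vadd X e (vscal X (-1) y))).

Lemma extend_fun_le_norm d t : D d -> f d + t * c <= vnorm X (vadd X d (vscal X t y)).
Proof.
intros Dd.
destruct (Rtotal_order t 0) as [tn|[tz|tp]].
- replace (vscal X t y) with (vscal X (- t) (vscal X (-1) y)) by (rewrite vscal_assoc; f_equal; ring).
  rewrite <- vscal_factor by lra.
  rewrite vnorm_scal, Rabs_right by lra.
  pose proof (c_lower _ (dp_scal _ _ g (/ - t) d Dd)) as Hc.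
  rewrite (dp_fscal _ _ g) in Hc by exact Dd.
  replace (f d + t * c) with (- t * (/ - t * f d - c)) by (field; lra).
  apply Rmult_le_compat_l; lra.
- subst t. rewrite vscal_0, vadd_zero, Rmult_0_l, Rplus_0_r. now apply (dp_le _ _ g).
- rewrite <- vscal_factor by lra. rewrite vnorm_scal, Rabs_right by lra.
  pose proof (c_upper _ (dp_scal _ _ g (/ t) d Dd)) as Hc.
  rewrite (dp_fscal _ _ g) in Hc by exact Dd.
  replace (f d + t * c) with (t * (/ t * f d + c)) by (field; lra).
  apply Rmult_le_compat_l; lra.
Qed.

Lemma one_step_extension :
  dominated_partial (add_line D y) (extend_fun D f y c) /\
  (forall x, D x -> add_line D y x /\ extend_fun D f y c x = f x) /\
  add_line D y y /\ extend_fun D f y c y = c.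
Proof.
assert (Hd : forall x, D x -> x = vadd X x (vscal X 0 y)) by (intros; now rewrite vscal_0, vadd_zero).
assert (Hy : y = vadd X (vzero X) (vscal X 1 y)) by now rewrite vscal_one, vadd_zero_l.
split; [split|split; [|split]].
- exists (vzero X), 0. split; [apply (dp_zero _ _ g)|]. apply Hd, (dp_zero _ _ g).
- intros x1 x2 [d1 [t1 [H1 ->]]] [d2 [t2 [H2 ->]]].
  exists (vadd X d1 d2), (t1 + t2). split; [apply (dp_add _ _ g); auto|].
  now rewrite vadd_swap4, vscal_distr_R.
- intros a x [d [t [H ->]]]. exists (vscal X a d), (a * t).
  split; [apply (dp_scal _ _ g); auto|]. now rewrite vscal_distr_vec, vscal_assoc.
- intros x1 x2 [d1 [t1 [H1 ->]]] [d2 [t2 [H2 ->]]].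
  rewrite vadd_swap4, <- vscal_distr_R, !extend_fun_eq, (dp_fadd _ _ g) by (auto; apply (dp_add _ _ g); auto).
  ring.
- intros a x [d [t [H ->]]].
  rewrite vscal_distr_vec, vscal_assoc, !extend_fun_eq, (dp_fscal _ _ g) by (auto; apply (dp_scal _ _ g); auto).
  ring.
- intros x [d [t [H ->]]]. rewrite extend_fun_eq by auto. now apply extend_fun_le_norm.
- intros x Dx. split; [exists x, 0; auto|].
  transitivity (extend_fun D f y c (vadd X x (vscal X 0 y))); [now rewrite <- Hd|].
  rewrite extend_fun_eq by auto. ring.
- exists (vzero X), 1. split; [apply (dp_zero _ _ g)|exact Hy].
- transitivity (extend_fun D f y c (vadd X (vzero X) (vscal X 1 y))); [now rewrite <- Hy|].
  pose proof (dp_zero _ _ g). rewrite extend_fun_eq, (dp_f0 _ _ g) by auto. ring.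
Qed.

End OneStep.

(* Admissible values exist: [sup (f e - |e - y|) <= inf (|e' + y| - f e')]. *)
Lemma extension_value_exists D f y (g : dominated_partial D f) :
  exists c, (forall e, D e -> f e + c <= vnorm X (vadd X e y)) /\
            (forall e, D e -> f e - c <= vnorm X (vadd X e (vscal X (-1) y))).
Proof.
assert (sep : forall e e', D e -> D e' ->
  f e - vnorm X (vadd X e (vscal X (-1) y)) <= vnorm X (vadd X e' y) - f e').
{ intros e e' He He'.
  assert (Hle : f (vadd X e e') <= vnorm X (vadd X (vadd X e (vscal X (-1) y)) (vadd X e' y))).
  { rewrite vadd_swap4, vscal_m1_cancel, vadd_zero. apply (dp_le _ _ g), (dp_add _ _ g); auto. }
  rewrite (dp_fadd _ _ g) in Hle by auto.
  pose proof (vnorm_triangle X (vadd X e (vscal X (-1) y)) (vadd X e' y)). lra. }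
pose proof (dp_zero _ _ g) as D0.
set (S := fun r => exists e, D e /\ r = f e - vnorm X (vadd X e (vscal X (-1) y))).
destruct (completeness S) as [m [Hub Hlub]].
- exists (vnorm X (vadd X (vzero X) y) - f (vzero X)). intros r [e [He ->]]. now apply sep.
- exists (f (vzero X) - vnorm X (vadd X (vzero X) (vscal X (-1) y))). exists (vzero X); auto.
- exists m. split.
  + intros e' He'. enough (m <= vnorm X (vadd X e' y) - f e') by lra.
    apply Hlub. intros r [e [He ->]]. now apply sep.
  + intros e He. enough (f e - vnorm X (vadd X e (vscal X (-1) y)) <= m) by lra.
    apply Hub. exists e; auto.
Qed.

End HahnBanach.

Section NormingFunctional.
Variables (X : BanachSpace) (x0 : X).

Record norming_candidate := {
  nc_dom : X -> Prop;
  nc_fun : X -> R;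
  nc_dominated : dominated_partial X nc_dom nc_fun;
  nc_at_x0 : nc_dom x0;
  nc_value : nc_fun x0 = vnorm X x0 }.

Definition extends (p q : norming_candidate) : Prop :=
  forall x, nc_dom p x -> nc_dom q x /\ nc_fun q x = nc_fun p x.

(* Boolean reflection of [extends], as required by the library's Zorn lemma. *)
Definition extendsb (p q : norming_candidate) : bool :=
  if excluded_middle_informative (extends p q) then true else false.

Lemma extendsb_spec p q : extendsb p q = true <-> extends p q.
Proof. unfold extendsb; destruct excluded_middle_informative; split; auto; discriminate. Qed.

Section ChainUnion.
Variables (A : norming_candidate -> Prop) (a0 : norming_candidate).
Hypotheses (a0_in : A a0) (A_chain : forall s t, A s -> A t -> extends s t \/ extends t s).

Definition chain_dom (x : X) : Prop := exists a, A a /\ nc_dom a x.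
Definition chain_member (x : X) : norming_candidate :=
  epsilon (inhabits a0) (fun a => A a /\ nc_dom a x).
Definition chain_fun (x : X) : R := nc_fun (chain_member x) x.

Lemma chain_fun_eq a x : A a -> nc_dom a x -> chain_fun x = nc_fun a x.
Proof.
intros Aa Dx. unfold chain_fun.
assert (Hc : A (chain_member x) /\ nc_dom (chain_member x) x) by (unfold chain_member; apply epsilon_spec; eauto).
destruct Hc as [Ac Dc].
destruct (A_chain a (chain_member x) Aa Ac) as [E|E].
- now apply E.
- symmetry; now apply E.
Qed.

Lemma chain_common a b x y : A a -> A b -> nc_dom a x -> nc_dom b y ->
  exists c, A c /\ nc_dom c x /\ nc_dom c y.
Proof.
intros Aa Ab Dx Dy. destruct (A_chain a b Aa Ab) as [E|E].
- exists b. repeat split; auto. now apply E.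
- exists a. repeat split; auto. now apply E.
Qed.

Lemma chain_union_dominated : dominated_partial X chain_dom chain_fun.
Proof.
split.
- exists a0. split; auto. apply (dp_zero _ _ _ (nc_dominated a0)).
- intros x y [a [Aa Dx]] [b [Ab Dy]].
  destruct (chain_common a b x y Aa Ab Dx Dy) as [c [Ac [Dcx Dcy]]].
  exists c. split; auto. now apply (dp_add _ _ _ (nc_dominated c)).
- intros r x [a [Aa Dx]]. exists a. split; auto. now apply (dp_scal _ _ _ (nc_dominated a)).
- intros x y [a [Aa Dx]] [b [Ab Dy]].
  destruct (chain_common a b x y Aa Ab Dx Dy) as [c [Ac [Dcx Dcy]]].
  pose proof (nc_dominated c) as gc.
  rewrite (chain_fun_eq c x), (chain_fun_eq c y), (chain_fun_eq c (vadd X x y)) by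
    (auto; now apply (dp_add _ _ _ gc)).
  now apply (dp_fadd _ _ _ gc).
- intros r x [a [Aa Dx]]. pose proof (nc_dominated a) as ga.
  rewrite (chain_fun_eq a x), (chain_fun_eq a (vscal X r x)) by (auto; now apply (dp_scal _ _ _ ga)).
  now apply (dp_fscal _ _ _ ga).
- intros x [a [Aa Dx]]. rewrite (chain_fun_eq a x) by auto.
  now apply (dp_le _ _ _ (nc_dominated a)).
Qed.

Lemma chain_union_bound : exists u, forall s, A s -> extends s u.
Proof.
assert (Hx0 : chain_dom x0) by (exists a0; split; auto; apply nc_at_x0).
assert (Hv : chain_fun x0 = vnorm X x0)
  by (rewrite (chain_fun_eq a0) by (auto; apply nc_at_x0); apply nc_value).
exists (Build_norming_candidate chain_dom chain_fun chain_union_dominated Hx0 Hv).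
intros s As x Dx. split; simpl.
- now exists s.
- now apply chain_fun_eq.
Qed.

End ChainUnion.

Lemma premaximal_total (t : norming_candidate) :
  (forall s, extends t s -> extends s t) -> forall y, nc_dom t y.
Proof.
intros tmax y. apply NNPP; intros ny.
pose proof (nc_dominated t) as gt.
destruct (extension_value_exists X _ _ y gt) as [c [C1 C2]].
destruct (one_step_extension X _ _ y c gt ny C1 C2) as [g' [Hext [Dy _]]].
destruct (Hext x0 (nc_at_x0 t)) as [D'x0 f'x0].
pose (t' := Build_norming_candidate _ _ g' D'x0 (eq_trans f'x0 (nc_value t))).
assert (E : extends t t') by exact Hext.
apply ny, (tmax t' E y Dy).
Qed.

Lemma dominated_total_in_ball (f : X -> R) :
  dominated_partial X (fun _ => True) f ->
  exists G : dual X, proj1_sig G = f /\ in_dual_ball X G.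
Proof.
intros g.
assert (babs : forall x, Rabs (f x) <= vnorm X x).
{ intros x. apply Rabs_le. split; [|now apply (dp_le _ _ _ g)].
  pose proof (dp_le _ _ _ g (vscal X (-1) x) I) as H.
  rewrite (dp_fscal _ _ _ g), vnorm_scal, Rabs_left in H by (auto; lra). lra. }
assert (Hd : is_linear X f /\ is_bounded X f).
{ split; [split|].
  - intros; now apply (dp_fadd _ _ _ g).
  - intros; now apply (dp_fscal _ _ _ g).
  - exists 1. intros x; rewrite Rmult_1_l; apply babs. }
now exists (exist _ f Hd).
Qed.

Lemma norming_candidate_exists : x0 <> vzero X -> inhabited norming_candidate.
Proof.
intros nz.
assert (g0 : dominated_partial X (fun v => v = vzero X) (fun _ => 0)).
{ split; intros; subst.
  - reflexivity.
  - apply vadd_zero.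
  - apply vscal_vzero.
  - ring.
  - ring.
  - apply vnorm_nonneg. }
assert (nD : ~ x0 = vzero X) by exact nz.
destruct (one_step_extension X _ _ x0 (vnorm X x0) g0 nD) as [g1 [_ [D1x0 f1x0]]].
- intros e ->. rewrite vadd_zero_l. lra.
- intros e ->. pose proof (vnorm_nonneg X x0).
  pose proof (vnorm_nonneg X (vadd X (vzero X) (vscal X (-1) x0))). lra.
- exact (inhabits (Build_norming_candidate _ _ g1 D1x0 f1x0)).
Qed.

Theorem norming_functional : x0 <> vzero X ->
  exists G : dual X, in_dual_ball X G /\ proj1_sig G x0 = vnorm X x0.
Proof.
intros nz. destruct (norming_candidate_exists nz) as [t0].
destruct (@classical_sets.ZL_preorder norming_candidate t0 extendsb) as [t tmax].
- intros s. apply extendsb_spec. intros x Dx; auto.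
- intros r s u H1 H2. apply extendsb_spec in H1, H2. apply extendsb_spec. intros x Dx.
  destruct (H1 x Dx) as [D2 E2]. destruct (H2 x D2) as [D3 E3]. split; congruence.
- intros A chain. destruct (classic (exists a, A a)) as [[a0 Aa0]|NA].
  + destruct (chain_union_bound A a0 Aa0) as [u Hu].
    * intros s t' As At. destruct (chain s t' As At); [left|right]; now apply extendsb_spec.
    * exists u. intros s As. now apply extendsb_spec, Hu.
  + exists t0. intros s As. exfalso; eauto.
- assert (full : forall y, nc_dom t y).
  { apply premaximal_total. intros s E. now apply extendsb_spec, tmax, extendsb_spec. }
  assert (g : dominated_partial X (fun _ => True) (nc_fun t)).
  { pose proof (nc_dominated t) as gt. split; intros; auto.
    - now apply (dp_fadd _ _ _ gt).
    - now apply (dp_fscal _ _ _ gt).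
    - now apply (dp_le _ _ _ gt). }
  destruct (dominated_total_in_ball _ g) as [G [EG GB]].
  exists G. split; auto. rewrite EG. apply nc_value.
Qed.

End NormingFunctional.

Lemma sig_eq {T : Type} (P : T -> Prop) (a b : {x | P x}) : proj1_sig a = proj1_sig b -> a = b.
Proof. destruct a, b; simpl; intros ->; f_equal; apply proof_irrelevance. Qed.

Lemma card_le_inj (A B K : Type) (i : A -> B) :
  (forall a b, i a = i b -> a = b) -> card_le B K -> card_le A K.
Proof. intros Hi [f Hf]. exists (fun a => f (i a)). auto. Qed.

Definition trace_injection (A Z : TopSpace) (h : pt A -> pt Z) : Prop :=
  (forall a b, h a = h b -> a = b) /\
  (forall O, isopen A O -> exists Q, isopen Z Q /\ forall a, Q (h a) <-> O a).

Section TraceInjection.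
Variables (A Z : TopSpace) (h : pt A -> pt Z).
Hypothesis h_trace : trace_injection A Z h.

Definition image (Y : pt A -> Prop) (z : pt Z) : Prop := exists a, Y a /\ h a = z.

Definition restrict (Y : pt A -> Prop) (y : {a | Y a}) : {z | image Y z} :=
  exist (image Y) (h (proj1_sig y)) (ex_intro _ (proj1_sig y) (conj (proj2_sig y) eq_refl)).

Lemma restrict_injective Y (y1 y2 : {a | Y a}) : restrict Y y1 = restrict Y y2 -> y1 = y2.
Proof.
intros E. apply (f_equal (@proj1_sig _ _)) in E. simpl in E.
apply sig_eq. now apply (proj1 h_trace).
Qed.

Lemma restrict_surjective Y (z : {z | image Y z}) : exists y, restrict Y y = z.
Proof. destruct z as [z [a [Ya <-]]]. exists (exist _ a Ya). now apply sig_eq. Qed.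

Lemma subspace_open_trace Y O : isopen (subspace A Y) O ->
  exists Q, isopen Z Q /\ forall y, Q (h (proj1_sig y)) <-> O y.
Proof.
intros [O0 [HO0 EO]]. destruct (proj2 h_trace O0 HO0) as [Q [HQ EQ]].
exists Q. split; auto. intros y. now rewrite EQ, EO.
Qed.

Lemma spread_le_trace K : spread_le Z K -> spread_le A K.
Proof.
intros SZ D HD. apply (card_le_inj _ _ _ (restrict D) (restrict_injective D)).
apply SZ. intros U.
destruct (subspace_open_trace D (fun y => U (restrict D y)) (HD _)) as [Q [HQ EQ]].
exists Q. split; auto. intros z. destruct (restrict_surjective D z) as [y <-].
symmetry. apply EQ.
Qed.

Lemma hdensity_le_trace K : hdensity_le Z K -> hdensity_le A K.
Proof.
intros DZ Y. destruct (DZ (image Y)) as [E [E_dense E_card]].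
exists (fun y => E (restrict Y y)). split.
- intros O HO [y Oy].
  destruct (subspace_open_trace Y O HO) as [Q [HQ EQ]].
  destruct (E_dense (fun z => Q (proj1_sig z))) as [z [Qz Ez]].
  + exists Q. split; auto. tauto.
  + exists (restrict Y y). now apply EQ.
  + destruct (restrict_surjective Y z) as [y' <-].
    exists y'. split; auto. now apply EQ.
- apply (card_le_inj _ _ _ (fun e => exist E (restrict Y (proj1_sig e)) (proj2_sig e))); auto.
  intros e1 e2 Ee. apply (f_equal (@proj1_sig _ _)), restrict_injective in Ee. now apply sig_eq.
Qed.

Lemma hlindelof_le_trace K : hlindelof_le Z K -> hlindelof_le A K.
Proof.
intros LZ Y U U_open U_cover.
pose (corr := fun (P : {z | image Y z} -> Prop) O => U O /\ forall y, P (restrict Y y) <-> O y).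
destruct (LZ (image Y) (fun P => exists O, corr P O)) as [V [V_sub [V_cover V_card]]].
- intros P [O [UO EO]]. destruct (subspace_open_trace Y O (U_open O UO)) as [Q [HQ EQ]].
  exists Q. split; auto. intros z. destruct (restrict_surjective Y z) as [y <-].
  rewrite EO. symmetry. apply EQ.
- intros z. destruct (restrict_surjective Y z) as [y <-].
  destruct (U_cover y) as [O [UO Oy]].
  destruct (subspace_open_trace Y O (U_open O UO)) as [Q [HQ EQ]].
  exists (fun z => Q (proj1_sig z)). split; [|now apply EQ].
  exists O. split; auto.
- pose (rep := fun P => epsilon (inhabits (fun _ : {a | Y a} => True)) (corr P)).
  assert (repP : forall P, V P -> corr P (rep P)).
  { intros P VP. apply epsilon_spec, V_sub, VP. }
  exists (fun O => exists P, V P /\ O = rep P). split; [|split].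
  + intros O [P [VP ->]]. apply repP, VP.
  + intros y. destruct (V_cover (restrict Y y)) as [P [VP Py]].
    exists (rep P). split; [now exists P|]. now apply repP.
  + assert (pick : forall s : {O | exists P, V P /\ O = rep P},
                   {P | V P /\ proj1_sig s = rep P})
      by (intros s; apply constructive_indefinite_description, (proj2_sig s)).
    apply (card_le_inj _ _ _ (fun s => exist V _ (proj1 (proj2_sig (pick s))))); auto.
    intros s t E. apply (f_equal (@proj1_sig _ _)) in E. simpl in E. apply sig_eq.
    rewrite (proj2 (proj2_sig (pick s))), (proj2 (proj2_sig (pick t))). now f_equal.
Qed.

End TraceInjection.

Section DualAffine.
Variable X : BanachSpace.

Lemma dual_ext (f g : dual X) : (forall x, proj1_sig f x = proj1_sig g x) -> f = g.
Proof. intros E. apply sig_eq, functional_extensionality, E. Qed.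

Lemma dual_scal (f : dual X) (a : R) (x : X) : proj1_sig f (vscal X a x) = a * proj1_sig f x.
Proof. apply (proj2 (proj1 (proj2_sig f))). Qed.

Lemma affine_comb_dual (a b : R) (f G : dual X) :
  is_linear X (fun x => a * proj1_sig f x + b * proj1_sig G x) /\
  is_bounded X (fun x => a * proj1_sig f x + b * proj1_sig G x).
Proof.
destruct f as [f [[fa fs] [Cf HCf]]], G as [g [[ga gs] [Cg HCg]]]; simpl.
split; [split|].
- intros x y; rewrite fa, ga; ring.
- intros c x; rewrite fs, gs; ring.
- exists (Rabs a * Cf + Rabs b * Cg). intros x.
  eapply Rle_trans; [apply Rabs_triang|]. rewrite !Rabs_mult.
  pose proof (Rabs_pos a); pose proof (Rabs_pos b).
  pose proof (Rmult_le_compat_l _ _ _ (Rabs_pos a) (HCf x)).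
  pose proof (Rmult_le_compat_l _ _ _ (Rabs_pos b) (HCg x)).
  lra.
Qed.

Definition affine_comb (a b : R) (f G : dual X) : dual X :=
  exist _ (fun x => a * proj1_sig f x + b * proj1_sig G x) (affine_comb_dual a b f G).

Lemma affine_preimage_open (a b : R) (G : dual X) (U : dual X -> Prop) :
  gen_open (weakstar_subbasis X) U ->
  gen_open (weakstar_subbasis X) (fun g => U (affine_comb a b g G)).
Proof.
intros HU; induction HU.
- destruct H as [x [l [u Hx]]]. apply go_sub.
  exists (vscal X a x), (l - b * proj1_sig G x), (u - b * proj1_sig G x).
  intros f. rewrite Hx. simpl. rewrite dual_scal. lra.
- apply go_full.
- now apply go_inter.
- now apply (go_union _ I (fun i g => F i (affine_comb a b g G))).
- eapply go_ext; [eassumption|]. intros x; simpl; auto.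
Qed.

Lemma norm_index_exists (f : dual X) :
  exists n : nat, forall x, Rabs (proj1_sig f x) <= INR n * vnorm X x.
Proof.
destruct (proj2 (proj2_sig f)) as [C HC].
destruct (INR_archimed 1 C) as [n Hn]; [lra|].
exists n; intros x. eapply Rle_trans; [apply HC|].
apply Rmult_le_compat_r; [apply vnorm_nonneg|lra].
Qed.

Definition norm_index (f : dual X) : nat :=
  proj1_sig (constructive_indefinite_description _ (norm_index_exists f)).

Lemma norm_index_spec (f : dual X) x : Rabs (proj1_sig f x) <= INR (norm_index f) * vnorm X x.
Proof. unfold norm_index; destruct constructive_indefinite_description; simpl; auto. Qed.

End DualAffine.

(* Scales of the embedding: the [n]-th window sits at height [scale n] and the
   functionals of norm at most [n] are shrunk by [shrink n] into a [scale n / 16]-ball. *)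
Definition scale (n : nat) : R := (/4) ^ n.
Definition shrink (n : nat) : R := scale n / (16 * (INR n + 1)).

Lemma scale_pos n : 0 < scale n.
Proof. unfold scale; apply pow_lt; lra. Qed.

Lemma scale_le_1 n : scale n <= 1.
Proof.
unfold scale. rewrite pow_inv, <- Rinv_1.
assert (1 <= 4 ^ n) by (change 1 with (4 ^ 0); apply Rle_pow; [lra|lia]).
apply Rinv_le_contravar; lra.
Qed.

Lemma scale_decrease n m : (n < m)%nat -> scale m <= scale n / 4.
Proof.
intros Hnm. unfold scale. rewrite !pow_inv.
replace (/ 4 ^ n / 4) with (/ (4 ^ S n)) by (simpl; field; apply pow_nonzero; lra).
apply Rinv_le_contravar; [apply pow_lt; lra|]. apply Rle_pow; [lra|lia].
Qed.

Lemma shrink_pos n : 0 < shrink n.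
Proof.
unfold shrink. pose proof (scale_pos n); pose proof (pos_INR n).
apply Rdiv_lt_0_compat; lra.
Qed.

Lemma shrink_norm n : shrink n * INR n <= scale n / 16.
Proof.
pose proof (scale_pos n); pose proof (pos_INR n).
replace (shrink n * INR n) with (scale n / 16 * (INR n / (INR n + 1))) by (unfold shrink; field; lra).
assert (Hq : INR n / (INR n + 1) <= 1).
{ apply (Rmult_le_reg_r (INR n + 1)); [lra|]. unfold Rdiv. rewrite Rmult_assoc, Rinv_l; lra. }
rewrite <- (Rmult_1_r (scale n / 16)) at 2. apply Rmult_le_compat_l; lra.
Qed.

Lemma shrunk_small (X : BanachSpace) (f : dual X) x :
  shrink (norm_index X f) * Rabs (proj1_sig f x) <= scale (norm_index X f) / 16 * vnorm X x.
Proof.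
set (n := norm_index X f). pose proof (shrink_pos n).
eapply Rle_trans; [apply Rmult_le_compat_l; [lra|apply norm_index_spec]|].
fold n. rewrite <- Rmult_assoc. apply Rmult_le_compat_r; [apply vnorm_nonneg|apply shrink_norm].
Qed.

Section BallEmbedding.
Variables (X : BanachSpace) (G : dual X) (x0 : X).
Hypotheses (G_ball : in_dual_ball X G) (G_norming : proj1_sig G x0 = vnorm X x0)
           (x0_pos : 0 < vnorm X x0).

Definition window (n : nat) (g : dual X) : Prop :=
  3/8 * scale n * vnorm X x0 < proj1_sig g x0 < 5/8 * scale n * vnorm X x0.

(* Windows are pairwise disjoint since consecutive scales differ by a factor 4. *)
Lemma window_disjoint n m g : window n g -> window m g -> n = m.
Proof.
unfold window; intros Hn Hm. pose proof (scale_pos n); pose proof (scale_pos m).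
destruct (Nat.lt_trichotomy n m) as [lt|[eq|lt]]; auto; exfalso.
- pose proof (scale_decrease n m lt). nra.
- pose proof (scale_decrease m n lt). nra.
Qed.

Definition into_ball (f : dual X) : dual X :=
  affine_comb X (shrink (norm_index X f)) (scale (norm_index X f) / 2) f G.

Definition out_of_window (n : nat) (g : dual X) : dual X :=
  affine_comb X (/ shrink n) (- (scale n / 2) / shrink n) g G.

Lemma out_of_window_into_ball f : out_of_window (norm_index X f) (into_ball f) = f.
Proof.
apply dual_ext; intros x; unfold out_of_window, into_ball; simpl.
pose proof (shrink_pos (norm_index X f)). field. lra.
Qed.

(* [|shrink n f x0| <= scale n |x0| / 16], so [into_ball f x0] is within [scale n |x0| / 16] of [scale n |x0| / 2]. *)
Lemma into_ball_window f : window (norm_index X f) (into_ball f).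
Proof.
unfold window, into_ball; simpl. rewrite G_norming.
set (n := norm_index X f).
pose proof (shrunk_small X f x0) as Hs. fold n in Hs.
pose proof (scale_pos n). pose proof (shrink_pos n).
pose proof (Rmult_le_compat_l _ _ _ (Rlt_le _ _ (shrink_pos n)) (Rle_abs (proj1_sig f x0))).
pose proof (Rmult_le_compat_l _ _ _ (Rlt_le _ _ (shrink_pos n)) (Rle_abs (- proj1_sig f x0))).
rewrite Rabs_Ropp in *. nra.
Qed.

(* Its norm is at most [scale n / 16 + scale n / 2 <= 1]. *)
Lemma into_ball_in_ball f : in_dual_ball X (into_ball f).
Proof.
intros x. unfold into_ball; simpl. set (n := norm_index X f).
pose proof (shrunk_small X f x). pose proof (G_ball x).
pose proof (shrink_pos n). pose proof (scale_pos n). pose proof (scale_le_1 n).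
pose proof (vnorm_nonneg X x).
eapply Rle_trans; [apply Rabs_triang|].
rewrite !Rabs_mult, (Rabs_right (shrink n)), (Rabs_right (scale n / 2)) by lra.
assert (scale n / 2 * Rabs (proj1_sig G x) <= scale n / 2 * vnorm X x)
  by (apply Rmult_le_compat_l; lra).
fold n in H. nra.
Qed.

Definition to_ball (f : dual X) : pt (dual_ball_weakstar X) :=
  exist _ (into_ball f) (into_ball_in_ball f).

Lemma to_ball_trace : trace_injection (dual_weakstar X) (dual_ball_weakstar X) to_ball.
Proof.
split.
- intros f f' E. apply (f_equal (@proj1_sig _ _)) in E. simpl in E.
  assert (Hn : norm_index X f = norm_index X f').
  { apply (window_disjoint _ _ (into_ball f)); [apply into_ball_window|].
    rewrite E; apply into_ball_window. }
  rewrite <- (out_of_window_into_ball f), <- (out_of_window_into_ball f'), <- Hn, E.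
  reflexivity.
- intros O HO.
  pose (Q := fun g => exists n, window n g /\ O (out_of_window n g)).
  exists (fun b => Q (proj1_sig b)). split.
  + exists Q. split; [|intros; tauto].
    apply (go_union _ nat (fun n g => window n g /\ O (out_of_window n g))).
    intros n. apply go_inter.
    * apply go_sub. exists x0, (3/8 * scale n * vnorm X x0), (5/8 * scale n * vnorm X x0).
      intros; unfold window; tauto.
    * now apply affine_preimage_open.
  + intros f. simpl. split.
    * intros [n [Wn On]].
      rewrite <- (window_disjoint _ _ _ (into_ball_window f) Wn), out_of_window_into_ball in On.
      exact On.
    * intros Of. exists (norm_index X f). split; [apply into_ball_window|].
      now rewrite out_of_window_into_ball.
Qed.

End BallEmbedding.

Lemma ball_inclusion_trace (X : BanachSpace) :
  trace_injection (dual_ball_weakstar X) (dual_weakstar X) (@proj1_sig _ _).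
Proof.
split.
- intros a b E; now apply sig_eq.
- intros O [O0 [HO0 E]]. exists O0; split; auto. intros a; now rewrite E.
Qed.

Lemma hereditary_trace (A Z : TopSpace) (h : pt A -> pt Z) (K : Type) :
  trace_injection A Z h ->
  (spread_le Z K -> spread_le A K) /\ (hlindelof_le Z K -> hlindelof_le A K) /\
  (hdensity_le Z K -> hdensity_le A K).
Proof.
intros Hh. repeat split.
- now apply (spread_le_trace A Z h).
- now apply (hlindelof_le_trace A Z h).
- now apply (hdensity_le_trace A Z h).
Qed.

Theorem mainTheorem1 (X : BanachSpace) (hX : infinite_dimensional X) (K : Type) :
  (spread_le (dual_weakstar X) K <-> spread_le (dual_ball_weakstar X) K) /\
  (hlindelof_le (dual_weakstar X) K <-> hlindelof_le (dual_ball_weakstar X) K) /\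
  (hdensity_le (dual_weakstar X) K <-> hdensity_le (dual_ball_weakstar X) K).
Proof.
destruct (hX nil) as [x0 not_span].
assert (nz : x0 <> vzero X) by (intros ->; apply not_span; now exists nil).
destruct (norming_functional X x0 nz) as [G [G_ball G_norming]].
destruct (hereditary_trace _ _ _ K (ball_inclusion_trace X)) as [s1 [l1 d1]].
destruct (hereditary_trace _ _ _ K (to_ball_trace X G x0 G_ball G_norming (vnorm_pos X x0 nz)))
  as [s2 [l2 d2]].
tauto.
Qed.
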